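(* Let $v\in M_N(\mathbb{C})$ and let $g(t)=e^{tv}$, $t\in[0,1]$. Then $g$ is an extremal of the $p$-energy functional, i.e. its left-translated velocity $g^{-1}(t)\dot g(t)$ satisfies the Euler–Lagrange equation $$\frac{d}{dt}\, v(t)(v(t)^*v(t))^{n-1}=(v(t)^*v(t))^n-(v(t)v(t)^* )^n,\qquad v(t)=g^{-1}(t)\dot g(t),$$ if and only if $v$ is normal, i.e. $vv^*=v^*v$.
   Context: $p=2n\ge 2$ is a fixed even integer. $G=GL(N)$ is the group of invertible complex $N\times N$ matrices, an open subset of $\mathcal A=M_N(\mathbb C)$. $\tau(x)=\frac1N\operatorname{Re}\operatorname{Tr}(x)$ is the normalized real part of the trace, $|x|=(x^*x)^{1/2}$, and $\|x\|_p=\tau(|x|^p)^{1/p}$. For a smooth curve $g:[0,1]\to G$, the $p$-energy is $\mathcal E_p(g)=\int_0^1\tau\big((v^*v)^n\big)\,dt$ with $v=g^{-1}\dot g$; the displayed Euler–Lagrange equation is the condition for $g$ to be a critical point of $\mathcal E_p$ under variations with fixed endpoints. *)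

From mathcomp Require Import all_boot all_algebra.
From mathcomp Require Import all_classical all_reals all_analysis.
From mathcomp Require Import complex.
Import GRing.Theory Num.Theory.
Import numFieldNormedType.Exports.
Local Open Scope classical_set_scope.
Local Open Scope ring_scope.

Set Implicit Arguments.
Unset Strict Implicit.
Unset Printing Implicit Defensive.

Definition rC (R : realType) (t : R) : R[i] := Complex t 0.

Definition mx_adj (R : realType) (N : nat) (A : 'M[R[i]]_N) : 'M[R[i]]_N :=
  map_mx (fun z : R[i] => z^*) A^T.

(* matrix power A^k (works for every N, including N = 0) *)
Definition mxpow (R : realType) (N : nat) (A : 'M[R[i]]_N) (k : nat) : 'M[R[i]]_N :=
  iter k (mulmx A) 1%:M.

Definition mexp_partial (R : realType) (N : nat) (A : 'M[R[i]]_N) (m : nat)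
  : 'M[R[i]]_N :=
  \sum_(k < m) (k`!%:R)^-1 *: mxpow A k.

Definition is_mxexp (R : realType) (N : nat) (A E : 'M[R[i]]_N) : Prop :=
  forall i j,
    (fun m => complex.Re (mexp_partial A m i j)) @ \oo --> complex.Re (E i j) /\
    (fun m => complex.Im (mexp_partial A m i j)) @ \oo --> complex.Im (E i j).

Definition mx_deriv (R : realType) (N : nat) (f : R -> 'M[R[i]]_N) (t : R)
  (D : 'M[R[i]]_N) : Prop :=
  forall i j,
    is_derive t 1 (fun s => complex.Re (f s i j)) (complex.Re (D i j)) /\
    is_derive t 1 (fun s => complex.Im (f s i j)) (complex.Im (D i j)).

Definition EL_lhs (R : realType) (N : nat) (n : nat) (w : 'M[R[i]]_N) : 'M[R[i]]_N :=
  w *m mxpow (mx_adj w *m w) n.-1.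

Definition EL_rhs (R : realType) (N : nat) (n : nat) (w : 'M[R[i]]_N) : 'M[R[i]]_N :=
  mxpow (mx_adj w *m w) n - mxpow (w *m mx_adj w) n.

(* g satisfies the Euler-Lagrange equation of the p-energy (p = 2n) on [0,1]:
   g is differentiable (with derivative gdot), v(t) = g(t)^{-1} gdot(t), and
   d/dt [v(t) (adj(v t) v(t))^(n-1)] exists and equals
   (adj(v t) v(t))^n - (v(t) adj(v t))^n for every t in [0,1]. *)
Definition satisfies_EL (R : realType) (N : nat) (n : nat)
  (g : R -> 'M[R[i]]_N) : Prop :=
  exists gdot : R -> 'M[R[i]]_N,
    (forall t, mx_deriv g t (gdot t)) /\
    forall t : R, 0 <= t <= 1 ->
      mx_deriv (fun s => EL_lhs n (invmx (g s) *m gdot s)) t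
               (EL_rhs n (invmx (g t) *m gdot t)).

(* Along g(t) = e^(tv) the left-translated velocity g^-1 g' is the constant v,
   because g' = g v and g(t) is invertible; so the Euler-Lagrange equation holds
   iff its right-hand side vanishes, i.e. (adj v v)^n = (v adj v)^n.  Positive
   semidefinite matrices have unique n-th roots: if x is an eigenvector of
   adj v v for the eigenvalue a >= 0, then x (v adj v)^n = a^n x forces
   x (v adj v) = a x, and such x form an orthonormal basis. *)

From mathcomp Require Import all_boot all_algebra.
From mathcomp Require Import all_classical all_reals all_analysis.
From mathcomp Require Import complex ring sesquilinear spectral.
Import GRing.Theory Num.Theory.
Import numFieldNormedType.Exports.
Local Open Scope classical_set_scope.
Local Open Scope ring_scope.

Set Implicit Arguments.
Unset Strict Implicit.
Unset Printing Implicit Defensive.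

Section GramMatrix.
Variables (C : numClosedFieldType) (N : nat).
Local Open Scope sesquilinear_scope.
Local Notation "''[' u , v ]" := (dotmx u v) : ring_scope.
Implicit Types (M A : 'M[C]_N) (x y : 'rV[C]_N).

Lemma adjmxM m n p (X : 'M[C]_(m, n)) (Y : 'M[C]_(n, p)) :
  (X *m Y)^t* = Y^t* *m X^t*.
Proof. by rewrite trmx_mul map_mxM. Qed.

Lemma dotmx_mulmxl x y A : '[x *m A, y] = '[x, y *m A^t*].
Proof. by rewrite !dotmxE adjmxM trmxCK mulmxA. Qed.

Lemma dotmx_eq0 x : ('[x, x] == 0) = (x == 0).
Proof. exact: dnorm_eq0. Qed.

Lemma gram_adj M : (M *m M^t*)^t* = M *m M^t*.
Proof. by rewrite adjmxM trmxCK. Qed.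

Lemma herm_expr_adj A k : A^t* = A -> (A ^+ k)^t* = A ^+ k.
Proof.
move=> AA; elim: k => [|k IH].
  by rewrite expr0 trmx1 map_mx1; reflexivity.
by rewrite exprS -mulmxE adjmxM IH AA mulmxE -exprSr exprS.
Qed.

Lemma gram_dotmx_ge0 M k x : 0 <= '[x *m (M *m M^t*) ^+ k, x].
Proof.
elim/ltn_ind: k x => -[|[|k]] IH x.
- by rewrite expr0 mulmx1 dnorm_ge0.
- by rewrite expr1 mulmxA dotmx_mulmxl trmxCK dnorm_ge0.
- rewrite exprS exprSr mulrA -!mulmxE mulmxA dotmx_mulmxl gram_adj.
  rewrite (mulmxA x (M *m M^t*)); exact: IH.
Qed.

Lemma herm_expr_eq0 A n x : A^t* = A -> (0 < n)%N ->
  x *m A ^+ n = 0 -> x *m A = 0.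
Proof.
move=> AA; case: n => // n _.
elim: n => [|n IH] Ax0; first by rewrite expr1 in Ax0.
apply: IH; apply/eqP; rewrite -dotmx_eq0 dotmxE.
have EA : A ^+ n.+1 * A ^+ n.+1 = A ^+ n.+2 * A ^+ n.
  by rewrite -!exprD addSnnS addnC.
rewrite adjmxM herm_expr_adj // mulmxA -(mulmxA x) mulmxE EA -mulmxE.
by rewrite mulmxA Ax0 !mul0mx mxE.
Qed.

Lemma gram_eigen_root M n x (a : C) : (0 < n)%N -> 0 <= a ->
  x *m (M *m M^t*) ^+ n = a ^+ n *: x -> x *m (M *m M^t*) = a *: x.
Proof.
move=> n_gt0 a_ge0.
have BB := gram_adj M; have B_ge0 := gram_dotmx_ge0 M.
move: (M *m M^t*) BB B_ge0 => B BB B_ge0 Bx.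
have [a0|a_neq0] := eqVneq a 0.
  rewrite a0 scale0r; apply: (herm_expr_eq0 BB n_gt0).
  by rewrite Bx a0 expr0n eqn0Ngt n_gt0 scale0r.
(* y := x (B - a) satisfies y S = 0 with S := \sum_i B^(n-1-i) a^i; all terms of
   '[y S, y] are nonnegative, so the last one, a^(n-1) '[y, y], vanishes. *)
pose y := x *m B - a *: x.
pose S := \sum_(i < n) B ^+ (n.-1 - i) * a%:M ^+ i.
have yS0 : y *m S = 0.
  rewrite -[y]/(x *m B - a *: x) -mul_mx_scalar -mulmxBr -mulmxA mulmxE.
  rewrite -subrXX_comm; last exact: scalar_mxC.
  by rewrite mulmxBr Bx -rmorphXn mul_mx_scalar subrr.
have : '[y *m S, y] = \sum_(i < n) a ^+ i * '[y *m B ^+ (n.-1 - i), y].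
  rewrite dotmxE mulmx_sumr mulmx_suml summxE; apply: eq_bigr => i _.
  by rewrite -rmorphXn -mulmxE mul_mx_scalar -scalemxAr -scalemxAl mxE dotmxE.
rewrite yS0 dotmxE !mul0mx mxE => /esym /psumr_eq0P y0.
have n1_lt : (n.-1 < n)%N by rewrite prednK.
have := y0 (fun i _ => mulr_ge0 (exprn_ge0 _ a_ge0) (B_ge0 _ _)) (Ordinal n1_lt) isT.
rewrite /= subnn expr0 mulmx1 => /eqP; rewrite mulf_eq0 expf_eq0 (negbTE a_neq0).
by rewrite andbF dotmx_eq0 subr_eq0 => /eqP.
Qed.

Lemma eigenvector_expr A x (a : C) k :
  x *m A = a *: x -> x *m A ^+ k = a ^+ k *: x.
Proof.
move=> xA; elim: k => [|k IH]; first by rewrite expr0 mulmx1 scale1r.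
by rewrite exprSr -mulmxE mulmxA IH -scalemxAl xA scalerA -exprSr.
Qed.

Lemma gram_expr_inj M1 M2 n : (0 < n)%N ->
  (M1 *m M1^t*) ^+ n = (M2 *m M2^t*) ^+ n -> M1 *m M1^t* = M2 *m M2^t*.
Proof.
move=> n_gt0 eq_n.
have /orthomx_spectralP A_spec : M1 *m M1^t* \is normalmx.
  by apply/normalmxP; rewrite gram_adj.
set P := spectralmx _ in A_spec; set d := spectral_diag _ in A_spec.
have P_unit : P \in unitmx := spectral_unit _.
have rowA i : row i P *m (M1 *m M1^t*) = d 0 i *: row i P.
  rewrite -row_mul {1}A_spec !mulmxA mulmxV // mul1mx.
  by rewrite row_mul row_diag_mx -scalemxAl -rowE.
have d_ge0 i : 0 <= d 0 i.
  have /row_unitarymxP/(_ i i) := spectral_unitarymx (M1 *m M1^t*).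
  rewrite eqxx mulr1n -/P => Pii.
  have -> : d 0 i = '[row i P *m (M1 *m M1^t*) ^+ 1, row i P].
    by rewrite expr1 rowA dotmxE -scalemxAl mxE -dotmxE Pii mulr1.
  exact: gram_dotmx_ge0.
have rowB i : row i P *m (M2 *m M2^t*) = row i P *m (M1 *m M1^t*).
  rewrite rowA; apply: gram_eigen_root n_gt0 (d_ge0 i) _.
  by rewrite -eq_n; apply: eigenvector_expr.
have PB : P *m (M2 *m M2^t*) = P *m (M1 *m M1^t*).
  by apply/row_matrixP => i; rewrite !row_mul rowB.
by rewrite -[LHS](mulKmx P_unit) -PB mulKmx.
Qed.

End GramMatrix.

Lemma scalemx_expr (K : comPzRingType) N (c : K) (A : 'M[K]_N) k :
  (c *: A) ^+ k = c ^+ k *: A ^+ k.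
Proof.
elim: k => [|k IH]; first by rewrite !expr0 scale1r.
by rewrite !exprS IH -!mulmxE -scalemxAl -scalemxAr scalerA.
Qed.

Lemma cvg_sum (R : realType) (I : Type) (r : seq I) (u : I -> nat -> R) (l : I -> R) :
  (forall i, u i @ \oo --> l i) ->
  (fun n => \sum_(i <- r) u i n) @ \oo --> \sum_(i <- r) l i.
Proof. by move=> ul; apply: cvg_big => //; exact: add_continuous. Qed.

Section ComplexParts.
Variable R : realType.
Local Notation C := R[i].
Local Notation Re := (@complex.Re R).
Local Notation Im := (@complex.Im R).

Lemma rCE (t : R) : rC t = t%:C%C. Proof. by []. Qed.

Lemma rC_natV (n : nat) : (n%:R : C)^-1 = rC (n%:R)^-1.
Proof. by rewrite rCE fmorphV rmorph_nat. Qed.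

Lemma complex_ext (z w : C) : Re z = Re w -> Im z = Im w -> z = w.
Proof. by case: z w => a b [c d] /= -> ->. Qed.

Lemma ReD (z w : C) : Re (z + w) = Re z + Re w. Proof. by case: z w => ? ? []. Qed.
Lemma ImD (z w : C) : Im (z + w) = Im z + Im w. Proof. by case: z w => ? ? []. Qed.
Lemma Re_rCM (r : R) (z : C) : Re (rC r * z) = r * Re z.
Proof. by case: z => a b /=; ring. Qed.
Lemma Im_rCM (r : R) (z : C) : Im (rC r * z) = r * Im z.
Proof. by case: z => a b /=; ring. Qed.

Lemma mxpowE N (A : 'M[C]_N) k : mxpow A k = A ^+ k.
Proof. by elim: k => [|k IH] //; rewrite exprS -IH -mulmxE. Qed.

Lemma mexp_partial_comm N (A : 'M[C]_N) (c : C) m :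
  mexp_partial (c *: A) m *m A = A *m mexp_partial (c *: A) m.
Proof.
rewrite /mexp_partial mulmx_suml mulmx_sumr; apply: eq_bigr => k _.
rewrite mxpowE scalemx_expr -!scalemxAl -!scalemxAr.
by rewrite mulmxE -exprSr exprS.
Qed.

Lemma mexp_partial0 N m : mexp_partial (0 : 'M[C]_N) m.+1 = 1%:M.
Proof.
rewrite /mexp_partial big_ord_recl big1 ?addr0 => [|k _].
  by rewrite fact0 invr1 scale1r.
by rewrite mxpowE expr0n scaler0.
Qed.

(* Complex identities and limits are obtained componentwise, through an
   arbitrary real-linear functional phi (in practice Re and Im). *)
Section RealLinearFunctional.
Variable phi : C -> R.
Hypothesis phiD : forall z w, phi (z + w) = phi z + phi w.
Hypothesis phi_rCM : forall r z, phi (rC r * z) = r * phi z.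

Lemma phi0 : phi 0 = 0.
Proof. by have := phi_rCM 0 0; rewrite !mul0r. Qed.

Lemma phi_sum (I : Type) (r : seq I) (F : I -> C) :
  phi (\sum_(i <- r) F i) = \sum_(i <- r) phi (F i).
Proof. exact: (big_morph phi phiD phi0). Qed.

Lemma phi_mul (z c : C) :
  phi (z * c) = Re z * phi c + Im z * phi ('i%C * c).
Proof.
rewrite [in LHS](_ : z = rC (Re z) + 'i%C * rC (Im z)); last first.
  by case: z => a b; apply: complex_ext => /=; ring.
by rewrite mulrDl phiD phi_rCM -mulrA mulrCA phi_rCM.
Qed.

Lemma cvg_phi_mulmx {N} {S : nat -> 'M[C]_N} {G : 'M[C]_N} :
  (forall i j, (fun m => Re (S m i j)) @ \oo --> Re (G i j) /\
               (fun m => Im (S m i j)) @ \oo --> Im (G i j)) ->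
  forall (P Q : 'M[C]_N) i j,
    (fun m => phi ((P *m S m *m Q) i j)) @ \oo --> phi ((P *m G *m Q) i j).
Proof.
move=> SG P Q i j.
have phiE X : phi ((P *m X *m Q) i j) = \sum_b \sum_a
    (Re (X a b) * phi (P i a * Q b j) + Im (X a b) * phi ('i%C * (P i a * Q b j))).
  rewrite mxE phi_sum; apply: eq_bigr => b _.
  rewrite mxE mulr_suml phi_sum; apply: eq_bigr => a _.
  rewrite mulrAC [_ * X a b]mulrC; exact: phi_mul.
under eq_cvg do rewrite phiE.
rewrite phiE; apply: cvg_sum => b; apply: cvg_sum => a.
by apply: cvgD; apply: cvgMl; [exact: (SG a b).1 | exact: (SG a b).2].
Qed.

Section ExpSeries.
Variables (N : nat) (v : 'M[C]_N) (g : R -> 'M[C]_N).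
Hypothesis g_exp : forall t, is_mxexp (rC t *: v) (g t).

(* phi ((e^(tv) W) i j) is the real power series in t with these coefficients. *)
Definition exp_coef (W : 'M[C]_N) i j (k : nat) : R :=
  phi (((k`!%:R)^-1 *: (v ^+ k *m W)) i j).

Lemma pseries_exp_coef W i j t m :
  pseries (exp_coef W i j) t m = phi ((mexp_partial (rC t *: v) m *m W) i j).
Proof.
rewrite /pseries /series /= big_mkord /mexp_partial mulmx_suml summxE phi_sum.
apply: eq_bigr => k _; rewrite mxpowE scalemx_expr -!scalemxAl !mxE rCE.
by rewrite /exp_coef !mxE -rmorphXn mulrCA (phi_rCM (t ^+ k)) mulrC.
Qed.

Lemma cvg_pseries_exp_coef W i j t :
  pseries (exp_coef W i j) t @ \oo --> phi ((g t *m W) i j).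
Proof.
rewrite -[g t]mul1mx (_ : pseries _ t = fun m =>
  phi ((1%:M *m mexp_partial (rC t *: v) m *m W) i j)).
  by apply: cvg_phi_mulmx; exact: g_exp.
by apply/funext => m; rewrite pseries_exp_coef mul1mx.
Qed.

Lemma pseries_diffs_exp_coef W i j :
  pseries_diffs (exp_coef W i j) = exp_coef (v *m W) i j.
Proof.
apply/funext => k; rewrite /pseries_diffs /exp_coef exprSr -mulmxE -mulmxA.
rewrite !mxE !rC_natV !phi_rCM mulrA; congr (_ * _).
by rewrite factS natrM invfM mulrA mulfV ?mul1r // pnatr_eq0.
Qed.

Lemma is_derive_phi_mxexp (i j : 'I_N) (t : R) :
  is_derive t 1 (fun s => phi (g s i j)) (phi ((g t *m v) i j)).
Proof.
have limE W s : phi ((g s *m W) i j) = limn (pseries (exp_coef W i j) s).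
  by rewrite (cvg_lim _ (@cvg_pseries_exp_coef W i j s)).
have cvg_exp W s : cvgn (pseries (exp_coef W i j) s).
  by apply/cvg_ex; eexists; exact: cvg_pseries_exp_coef.
rewrite (_ : (fun s => _) = fun s => limn (pseries (exp_coef 1%:M i j) s)); last first.
  by apply/funext => s; rewrite -limE mulmx1.
rewrite -[v]mulmx1 limE -pseries_diffs_exp_coef.
apply: (@pseries_snd_diffs _ _ (`|t| + 1)); rewrite ?pseries_diffs_exp_coef //.
by rewrite (@ger0_norm _ (`|t| + 1)) ?ltrDl // addr_ge0.
Qed.

Lemma phi_mxexp_comm t i j : phi ((g t *m v) i j) = phi ((v *m g t) i j).
Proof.
pose S m := mexp_partial (rC t *: v) m.
have S_comm : (fun m => phi ((1%:M *m S m *m v) i j)) =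
              (fun m => phi ((v *m S m *m 1%:M) i j)).
  by apply/funext => m; rewrite mul1mx mulmx1 mexp_partial_comm.
have cvg_l : (fun m => phi ((1%:M *m S m *m v) i j)) @ \oo -->
             phi ((1%:M *m g t *m v) i j) by apply: cvg_phi_mulmx; exact: g_exp.
have cvg_r : (fun m => phi ((v *m S m *m 1%:M) i j)) @ \oo -->
             phi ((v *m g t *m 1%:M) i j) by apply: cvg_phi_mulmx; exact: g_exp.
rewrite S_comm mul1mx in cvg_l; rewrite mulmx1 in cvg_r.
exact: cvg_unique _ cvg_l cvg_r.
Qed.

Lemma phi_mxexp0 i j : phi (g 0 i j) = phi ((1%:M : 'M[C]_N) i j).
Proof.
have S_cst : (fun m => phi ((1%:M *m mexp_partial (rC 0 *: v) m.+1 *m 1%:M) i j)) =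
             (fun=> phi ((1%:M : 'M[C]_N) i j)).
  by apply/funext => m; rewrite mul1mx mulmx1 scale0r mexp_partial0.
have cvg_g0 : (fun m => phi ((1%:M *m mexp_partial (rC 0 *: v) m *m 1%:M) i j))
    @ \oo --> phi ((1%:M *m g 0 *m 1%:M) i j) by apply: cvg_phi_mulmx; exact: g_exp.
rewrite -cvg_shiftS /= S_cst mul1mx mulmx1 in cvg_g0.
exact: cvg_unique _ cvg_g0 (cvg_cst _).
Qed.

End ExpSeries.
End RealLinearFunctional.

Definition cplx_derive (f : R -> C) (t : R) (F : C) :=
  is_derive t 1 (fun s => Re (f s)) (Re F) /\ is_derive t 1 (fun s => Im (f s)) (Im F).

Lemma cplx_derive_cst (c : C) t : cplx_derive (fun=> c) t 0.
Proof. by split; exact: is_derive_cst. Qed.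

Lemma cplx_deriveD f h t F H : cplx_derive f t F -> cplx_derive h t H ->
  cplx_derive (fun s => f s + h s) t (F + H).
Proof.
move=> [fRe fIm] [hRe hIm]; split.
  rewrite ReD (_ : (fun s => _) = (fun s => Re (f s)) + (fun s => Re (h s))).
    exact: is_deriveD.
  by apply/funext => s; rewrite ReD.
rewrite ImD (_ : (fun s => _) = (fun s => Im (f s)) + (fun s => Im (h s))).
  exact: is_deriveD.
by apply/funext => s; rewrite ImD.
Qed.

Lemma cplx_derive_sum (I : Type) (r : seq I) (u : I -> R -> C) (U : I -> C) t :
  (forall l, cplx_derive (u l) t (U l)) ->
  cplx_derive (fun s => \sum_(l <- r) u l s) t (\sum_(l <- r) U l).
Proof.
move=> uU; elim: r => [|a r IH].
  rewrite big_nil (_ : (fun s => _) = fun=> 0); first exact: cplx_derive_cst.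
  by apply/funext => s; rewrite big_nil.
rewrite big_cons (_ : (fun s => _) = fun s => u a s + \sum_(l <- r) u l s).
  exact: cplx_deriveD.
by apply/funext => s; rewrite big_cons.
Qed.

Lemma cplx_deriveM f h t F H : cplx_derive f t F -> cplx_derive h t H ->
  cplx_derive (fun s => f s * h s) t (F * h t + f t * H).
Proof.
move=> [fRe fIm] [hRe hIm]; split.
  rewrite (_ : (fun s => _) = (fun s => Re (f s)) * (fun s => Re (h s)) -
                              (fun s => Im (f s)) * (fun s => Im (h s))); last first.
    by apply/funext => s; rewrite !fctE; case: (f s) (h s) => ? ? [].
  apply: is_derive_eq (is_deriveB (is_deriveM fRe hRe) (is_deriveM fIm hIm)) _.
  rewrite /GRing.scale; clear fRe fIm hRe hIm.
  by move: F H (f t) (h t) => [? ?] [? ?] [? ?] [? ?] /=; ring.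
rewrite (_ : (fun s => _) = (fun s => Re (f s)) * (fun s => Im (h s)) +
                            (fun s => Im (f s)) * (fun s => Re (h s))); last first.
  by apply/funext => s; rewrite !fctE; case: (f s) (h s) => ? ? [? ?] /=; rewrite addrC.
apply: is_derive_eq (is_deriveD (is_deriveM fRe hIm) (is_deriveM fIm hRe)) _.
rewrite /GRing.scale; clear fRe fIm hRe hIm.
by move: F H (f t) (h t) => [? ?] [? ?] [? ?] [? ?] /=; ring.
Qed.

Lemma cplx_derive_compN f t F : cplx_derive f (- t) F ->
  cplx_derive (fun s => f (- s)) t (- F).
Proof.
move=> [fRe fIm]; split.
  apply: is_derive_eq (is_derive1_comp fRe (is_deriveNid t 1)) _.
  by rewrite mulrN1 raddfN.
apply: is_derive_eq (is_derive1_comp fIm (is_deriveNid t 1)) _.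
by rewrite mulrN1 raddfN.
Qed.

End ComplexParts.

Section MatrixDerive.
Variables (R : realType) (N : nat).
Local Notation C := R[i].
Implicit Types (f h : R -> 'M[C]_N) (F H : 'M[C]_N).

Lemma mx_derivP f t F :
  mx_deriv f t F <-> forall i j, cplx_derive (fun s => f s i j) t (F i j).
Proof. by []. Qed.

Lemma mx_derive_cst F t : mx_deriv (fun=> F) t 0.
Proof. by apply/mx_derivP => i j; rewrite mxE; exact: cplx_derive_cst. Qed.

Lemma mx_deriveM f h t F H : mx_deriv f t F -> mx_deriv h t H ->
  mx_deriv (fun s => f s *m h s) t (F *m h t + f t *m H).
Proof.
move=> /mx_derivP fF /mx_derivP hH; apply/mx_derivP => i j; rewrite !mxE -big_split /=.
rewrite (_ : (fun s => _) = fun s => \sum_l f s i l * h s l j); last first.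
  by apply/funext => s; rewrite mxE.
by apply: cplx_derive_sum => l; apply: cplx_deriveM.
Qed.

Lemma mx_derive_compN f t F : mx_deriv f (- t) F ->
  mx_deriv (fun s => f (- s)) t (- F).
Proof.
move=> /mx_derivP fF; apply/mx_derivP => i j; rewrite mxE.
exact: (@cplx_derive_compN _ (fun x => f x i j) _ _ (fF i j)).
Qed.

Lemma mx_derive_unique f t F H : mx_deriv f t F -> mx_deriv f t H -> F = H.
Proof.
move=> fF fH; apply/matrixP => i j; have [FRe FIm] := fF i j; have [HRe HIm] := fH i j.
apply: complex_ext.
  by rewrite -(@derive_val _ _ _ _ _ _ _ FRe) -(@derive_val _ _ _ _ _ _ _ HRe).
by rewrite -(@derive_val _ _ _ _ _ _ _ FIm) -(@derive_val _ _ _ _ _ _ _ HIm).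
Qed.

Lemma mx_derive0_cst f : (forall t, mx_deriv f t 0) -> forall s t, f s = f t.
Proof.
move=> f0 s t; apply/matrixP => i j; apply: complex_ext.
  apply: (@is_derive_0_is_cst _ (fun x => complex.Re (f x i j))) => x.
  by have [+ _] := f0 x i j; rewrite mxE.
apply: (@is_derive_0_is_cst _ (fun x => complex.Im (f x i j))) => x.
by have [_ +] := f0 x i j; rewrite mxE.
Qed.

End MatrixDerive.

Section MatrixExponentialCurve.
Variables (R : realType) (N : nat) (v : 'M[R[i]]_N) (g : R -> 'M[R[i]]_N).
Hypothesis g_exp : forall t, is_mxexp (rC t *: v) (g t).

Lemma mxexp_derive t : mx_deriv g t (g t *m v).
Proof.
by move=> i j; split; apply: is_derive_phi_mxexp g_exp i j t;
  [exact: ReD | exact: Re_rCM | exact: ImD | exact: Im_rCM].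
Qed.

Lemma mxexp_comm t : g t *m v = v *m g t.
Proof.
apply/matrixP => i j; apply: complex_ext; apply: phi_mxexp_comm g_exp t i j;
  [exact: ReD | exact: Re_rCM | exact: ImD | exact: Im_rCM].
Qed.

Lemma mxexp0 : g 0 = 1%:M.
Proof.
apply/matrixP => i j; apply: complex_ext; apply: phi_mxexp0 g_exp i j;
  [exact: ReD | exact: Re_rCM | exact: ImD | exact: Im_rCM].
Qed.

(* g s g(-s) has derivative g s v g(-s) - g s g(-s) v = 0, so it is g 0 g 0 = 1. *)
Lemma mxexp_unit t : g t \in unitmx.
Proof.
have gNg_cst x : mx_deriv (fun s => g s *m g (- s)) x 0.
  have := mx_deriveM (mxexp_derive x) (mx_derive_compN (mxexp_derive (- x))).
  by rewrite (mxexp_comm (- x)) mulmxN mulmxA subrr.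
have := mx_derive0_cst gNg_cst t 0; rewrite oppr0 mxexp0 mulmx1.
by case/mulmx1_unit.
Qed.

End MatrixExponentialCurve.

Lemma EL_rhs_eq0 (R : realType) N n (w : 'M[R[i]]_N) : (0 < n)%N ->
  EL_rhs n w = 0 <-> w *m mx_adj w = mx_adj w *m w.
Proof.
move=> n_gt0; rewrite /EL_rhs !mxpowE; split => [/eqP | ->]; last exact: subrr.
rewrite subr_eq0 => /eqP wn.
have := @gram_expr_inj _ _ (mx_adj w) w n; rewrite -[mx_adj w]/(w ^t*)%sesqui trmxCK.
by move=> /(_ n_gt0 wn) /esym.
Qed.

Theorem mainTheorem1 (R : realType) (N n : nat) (hn : (0 < n)%N)
  (v : 'M[R[i]]_N) (g : R -> 'M[R[i]]_N)
  (hg : forall t : R, is_mxexp (rC t *: v) (g t)) :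
  satisfies_EL n g <-> v *m mx_adj v = mx_adj v *m v.
Proof.
rewrite -(EL_rhs_eq0 _ hn).
have velocity s : invmx (g s) *m (g s *m v) = v by rewrite mulKmx // (mxexp_unit hg).
have EL_lhs_cst : (fun s => EL_lhs n (invmx (g s) *m (g s *m v))) = fun=> EL_lhs n v.
  by apply/funext => s; rewrite velocity.
split.
- case=> gdot [g_gdot EL].
  have gdotE t : gdot t = g t *m v := mx_derive_unique (g_gdot t) (mxexp_derive hg t).
  have in01_0 : ((0 : R) <= 0) && ((0 : R) <= 1) by rewrite ler01 andbT.
  have := EL 0 in01_0; rewrite (funext gdotE) EL_lhs_cst velocity => EL0.
  exact: mx_derive_unique EL0 (mx_derive_cst _ _).
- move=> rhs0; exists (fun t => g t *m v); split => [t|t _]; first exact: mxexp_derive.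
  by rewrite EL_lhs_cst velocity rhs0; exact: mx_derive_cst.
Qed.
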